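(* Let $N,G,H$ be finitely generated groups. If $G$ and $H$ are biLipschitz equivalent, then $N\wr G$ and $N\wr H$ are biLipschitz equivalent.
   Context: Groups carry word metrics from finite generating sets. $N\wr G=\bigl(\bigoplus_G N\bigr)\rtimes G$ with $G$ acting by left translation of coordinates, with the word metric for the standard generating set (lamp generators at the identity and generators of $G$). A biLipschitz equivalence is a bijection $f$ with $\frac1C d(x,y)\le d(f(x),f(y))\le Cd(x,y)$ for some $C\ge1$. *)

From Stdlib Require Import Reals List ClassicalDescription.
Import ListNotations.
Set Implicit Arguments.

Record group := Group {
  gcar :> Type;
  gmul : gcar -> gcar -> gcar;
  gone : gcar;
  ginv : gcar -> gcar;
  gmulA : forall x y z, gmul x (gmul y z) = gmul (gmul x y) z;
  gmul1l : forall x, gmul gone x = x;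
  gmul1r : forall x, gmul x gone = x;
  gmulVl : forall x, gmul (ginv x) x = gone;
  gmulVr : forall x, gmul x (ginv x) = gone
}.
Arguments gmul : clear implicits.
Arguments ginv : clear implicits.
Arguments gmulA : clear implicits.
Arguments gmul1l : clear implicits.
Arguments gmul1r : clear implicits.
Arguments gmulVl : clear implicits.
Arguments gmulVr : clear implicits.

Section WordMetric.
Variables (T : Type) (mul : T -> T -> T) (one : T) (inv : T -> T).

Definition is_word (S : list T) (w : list T) : Prop :=
  Forall (fun s => In s S \/ In (inv s) S) w.

Definition word_prod (w : list T) : T := fold_right mul one w.

Definition generates (S : list T) : Prop :=
  forall g, exists w, is_word S w /\ word_prod w = g.

Definition word_len (S : list T) (g : T) (n : nat) : Prop :=
  (exists w, is_word S w /\ word_prod w = g /\ length w = n) /\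
  (forall w, is_word S w -> word_prod w = g -> (n <= length w)%nat).

Definition wdist (S : list T) (x y : T) (n : nat) : Prop :=
  word_len S (mul (inv x) y) n.
End WordMetric.

Definition bijective {A B : Type} (f : A -> B) : Prop :=
  (forall x y, f x = f y -> x = y) /\ (forall z, exists x, f x = z).

Definition biLipschitz_equiv
  (T1 : Type) (mul1 : T1 -> T1 -> T1) (one1 : T1) (inv1 : T1 -> T1) (S1 : list T1)
  (T2 : Type) (mul2 : T2 -> T2 -> T2) (one2 : T2) (inv2 : T2 -> T2) (S2 : list T2) : Prop :=
  exists f : T1 -> T2, bijective f /\
    exists C : R, (1 <= C)%R /\
      forall x y n m, wdist mul1 one1 inv1 S1 x y n -> wdist mul2 one2 inv2 S2 (f x) (f y) m ->
        (INR n / C <= INR m <= C * INR n)%R.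

Definition group_biLipschitz (G H : group) (SG : list G) (SH : list H) : Prop :=
  biLipschitz_equiv (gmul G) (gone G) (ginv G) SG (gmul H) (gone H) (ginv H) SH.
Arguments group_biLipschitz : clear implicits.

Section Wreath.
Variables (N G : group).

Definition fin_supp (phi : G -> N) : Prop :=
  exists l : list G, forall x, ~ In x l -> phi x = gone N.

Definition lamp := { phi : G -> N | fin_supp phi }.

Lemma ginv1 (K : group) : ginv K (gone K) = gone K.
Proof. rewrite <- (gmul1l K (ginv K (gone K))). apply gmulVr. Qed.

Lemma fin_supp_mul (phi psi : G -> N) :
  fin_supp phi -> fin_supp psi -> fin_supp (fun x => gmul N (phi x) (psi x)).
Proof.
  intros [l1 H1] [l2 H2]. exists (l1 ++ l2). intros x Hx.
  rewrite H1, H2. apply (gmul1l N).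
  - intro; apply Hx, in_or_app; now right.
  - intro; apply Hx, in_or_app; now left.
Qed.

Lemma fin_supp_inv (phi : G -> N) :
  fin_supp phi -> fin_supp (fun x => ginv N (phi x)).
Proof. intros [l H1]. exists l. intros x Hx. rewrite H1 by exact Hx. apply ginv1. Qed.

Lemma fin_supp_shift (g : G) (psi : G -> N) :
  fin_supp psi -> fin_supp (fun x => psi (gmul G (ginv G g) x)).
Proof.
  intros [l H1]. exists (map (gmul G g) l). intros x Hx. apply H1. intro Hin.
  apply Hx. replace x with (gmul G g (gmul G (ginv G g) x)).
  - now apply in_map.
  - rewrite gmulA, gmulVr. apply (gmul1l G).
Qed.

Lemma fin_supp_one : fin_supp (fun _ => gone N).
Proof. exists nil. auto. Qed.

Lemma fin_supp_delta (s : N) :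
  fin_supp (fun x => if excluded_middle_informative (x = gone G) then s else gone N).
Proof.
  exists [gone G]. intros x Hx.
  destruct (excluded_middle_informative (x = gone G)) as [e|]; auto.
  exfalso; apply Hx; left; auto.
Qed.

Definition lmul (a b : lamp) : lamp :=
  exist _ _ (fin_supp_mul (proj2_sig a) (proj2_sig b)).
Definition linv (a : lamp) : lamp := exist _ _ (fin_supp_inv (proj2_sig a)).
Definition lshift (g : G) (a : lamp) : lamp := exist _ _ (fin_supp_shift g (proj2_sig a)).
Definition lone : lamp := exist _ _ fin_supp_one.
Definition ldelta (s : N) : lamp := exist _ _ (fin_supp_delta s).

Definition wreath : Type := (lamp * G)%type.
Definition wmul (u v : wreath) : wreath :=
  (lmul (fst u) (lshift (snd u) (fst v)), gmul G (snd u) (snd v)).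
Definition wone : wreath := (lone, gone G).
Definition winv (u : wreath) : wreath :=
  (lshift (ginv G (snd u)) (linv (fst u)), ginv G (snd u)).

Definition wreath_gens (SN : list N) (SG : list G) : list wreath :=
  map (fun s => (ldelta s, gone G)) SN ++ map (fun t => (lone, t)) SG.
End Wreath.
Arguments wmul : clear implicits.
Arguments winv : clear implicits.
Arguments wreath_gens : clear implicits.

(* A biLipschitz bijection f : G -> H moves each Cayley-graph edge of G to a
   path of bounded length in H, and conversely for its inverse.  Transport it
   to the wreath products by (phi, g) |-> (phi o f^-1, f g): moving the cursor
   along an edge of G becomes a bounded path of the cursor in H, and switching
   the lamp under the cursor g becomes switching the lamp under the cursor f g.
   So the transported bijection, and likewise its inverse, stretches edges by a
   bounded factor, which is exactly biLipschitz for word metrics. *)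
From Stdlib Require Import Reals List Lia Lra.
From Stdlib Require Import FunctionalExtensionality ProofIrrelevance Classical ClassicalDescription.
Import ListNotations.
Set Implicit Arguments.

Local Notation wprod A := (word_prod (gmul A) (gone A)).
Local Notation word A := (is_word (ginv A)).
Local Notation gdist A := (wdist (gmul A) (gone A) (ginv A)).

Section GroupFacts.
Variable K : group.

Lemma gmulKg (x y : K) : gmul K (ginv K x) (gmul K x y) = y.
Proof. now rewrite gmulA, gmulVl, gmul1l. Qed.

Lemma gmulKVg (x y : K) : gmul K x (gmul K (ginv K x) y) = y.
Proof. now rewrite gmulA, gmulVr, gmul1l. Qed.

Lemma ginvK (x : K) : ginv K (ginv K x) = x.
Proof. rewrite <- (gmulKg (ginv K x) x) at 2. now rewrite gmulVl, gmul1r. Qed.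

Lemma ginvM (x y : K) : ginv K (gmul K x y) = gmul K (ginv K y) (ginv K x).
Proof.
  rewrite <- (gmulKg (gmul K x y) (gmul K (ginv K y) (ginv K x))).
  now rewrite <- (gmulA K x y), (gmulKVg y), gmulVr, gmul1r.
Qed.

Lemma gmul_inv_eq1 (x y : K) : gmul K (ginv K x) y = gone K -> y = x.
Proof. intro E. now rewrite <- (gmulKVg x y), E, gmul1r. Qed.

End GroupFacts.

Section Words.
Context {A : group} (S : list A).

Definition letter (a : A) : Prop := In a S \/ In (ginv A a) S.

Lemma word_prod_app (w1 w2 : list A) :
  wprod A (w1 ++ w2) = gmul A (wprod A w1) (wprod A w2).
Proof.
  induction w1 as [|a w1 IH]; simpl.
  - now rewrite gmul1l.
  - now rewrite IH, gmulA.
Qed.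

Lemma word_len_exists (g : A) (w : list A) :
  word A S w -> wprod A w = g -> exists n, word_len (gmul A) (gone A) (ginv A) S g n.
Proof.
  remember (length w) as k eqn:Hk. revert w Hk.
  induction k as [k IH] using (well_founded_induction Wf_nat.lt_wf).
  intros w Hk Hw Hp.
  destruct (classic (exists w', word A S w' /\ wprod A w' = g /\ length w' < k))
    as [(w' & Hw' & Hp' & Hl') | Hmin].
  - exact (IH _ Hl' w' eq_refl Hw' Hp').
  - exists k. split; [now exists w|].
    intros w' Hw' Hp'. apply Nat.nlt_ge. intro Hl'. apply Hmin. eauto.
Qed.

Definition word_inv (w : list A) : list A := rev (map (ginv A) w).

Lemma word_prod_inv (w : list A) : wprod A (word_inv w) = ginv A (wprod A w).
Proof.
  unfold word_inv. induction w as [|a w IH]; simpl.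
  - symmetry. apply ginv1.
  - now rewrite word_prod_app, IH, ginvM; simpl; rewrite gmul1r.
Qed.

Lemma is_word_inv (w : list A) : word A S w -> word A S (word_inv w).
Proof.
  unfold is_word, word_inv. intro Hw.
  apply Forall_rev, Forall_map. eapply Forall_impl; [|exact Hw].
  intros a [Ha|Ha]; [right; now rewrite ginvK | now left].
Qed.

Lemma length_word_inv (w : list A) : length (word_inv w) = length w.
Proof. unfold word_inv. now rewrite length_rev, length_map. Qed.

End Words.

Section EdgeStretch.
Context {A B : group} (SA : list A) (SB : list B).

Definition edge_stretch_le (F : A -> B) (K : nat) : Prop :=
  forall u a, letter SA a -> exists w, word B SB w /\ (length w <= K)%nat /\
    gmul B (F u) (wprod B w) = F (gmul A u a).

Lemma edge_stretch_le_of_gens (F : A -> B) (K : nat) :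
  (forall u a, In a SA -> exists w, word B SB w /\ (length w <= K)%nat /\
     gmul B (F u) (wprod B w) = F (gmul A u a)) ->
  edge_stretch_le F K.
Proof.
  intros Hgen u a [Ha|Ha]; [exact (Hgen u a Ha)|].
  destruct (Hgen (gmul A u a) _ Ha) as (w & Hw & Hl & Hp).
  rewrite <- gmulA, gmulVr, gmul1r in Hp.
  exists (word_inv w). split; [|split].
  - now apply is_word_inv.
  - now rewrite length_word_inv.
  - rewrite word_prod_inv, <- Hp, <- gmulA, gmulVr. apply gmul1r.
Qed.

Lemma edge_stretch_word (F : A -> B) (K : nat) :
  edge_stretch_le F K -> forall w x, word A SA w ->
  exists w', word B SB w' /\ (length w' <= K * length w)%nat /\
    gmul B (F x) (wprod B w') = F (gmul A x (wprod A w)).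
Proof.
  intros HF w. induction w as [|a w IH]; intros x Hw.
  - exists []. repeat split; simpl; [constructor | lia | now rewrite !gmul1r].
  - inversion Hw as [|? ? Ha Hw']; subst.
    destruct (HF x a Ha) as (w1 & Hw1 & Hl1 & Hp1).
    destruct (IH (gmul A x a) Hw') as (w2 & Hw2 & Hl2 & Hp2).
    exists (w1 ++ w2). split; [|split].
    + now apply Forall_app.
    + rewrite length_app. simpl. nia.
    + simpl. now rewrite word_prod_app, gmulA, Hp1, Hp2, gmulA.
Qed.

Lemma wdist_le_edge_stretch (F : A -> B) (K : nat) :
  edge_stretch_le F K ->
  forall x y n m, gdist A SA x y n -> gdist B SB (F x) (F y) m -> (m <= K * n)%nat.
Proof.
  intros HF x y n m [(w & Hw & Hp & <-) _] [_ Hmin].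
  destruct (edge_stretch_word HF x Hw) as (w' & Hw' & Hl & Hp').
  apply (Nat.le_trans _ (length w')); [|exact Hl].
  apply Hmin; [exact Hw'|].
  now rewrite Hp, gmulKVg in Hp'; rewrite <- Hp', gmulKg.
Qed.

(* [SB] must generate so that the image of an edge is joined by a geodesic;
   [SA] need not. *)
Lemma edge_stretch_of_lipschitz (h : A -> B) (C : R) (K : nat) :
  generates (gmul B) (gone B) (ginv B) SB -> (C <= INR K)%R ->
  (forall x y n m, gdist A SA x y n -> gdist B SB (h x) (h y) m -> (INR m <= C * INR n)%R) ->
  edge_stretch_le h K.
Proof.
  intros HB HCK Hh g t Ht.
  assert (Hg : gmul A (ginv A g) (gmul A g t) = wprod A [t])
    by (simpl; now rewrite gmul1r, gmulKg).
  assert (Ht1 : word A SA [t]) by exact (Forall_cons _ Ht (Forall_nil _)).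
  destruct (word_len_exists Ht1 (eq_sym Hg)) as [n Hn].
  assert (Hn1 : (n <= 1)%nat) by exact (proj2 Hn [t] Ht1 (eq_sym Hg)).
  destruct (HB (gmul B (ginv B (h g)) (h (gmul A g t)))) as (v & Hv & Hpv).
  destruct (word_len_exists Hv Hpv) as [m Hm].
  pose proof (Hh g (gmul A g t) n m Hn Hm) as Hmn.
  assert (HmK : (m <= K)%nat).
  { apply INR_le. destruct n as [|[|n]]; [| |lia]; simpl in Hmn; pose proof (pos_INR K); lra. }
  destruct Hm as [(w & Hw & Hp & Hl) _].
  exists w. repeat split; [exact Hw | lia | now rewrite Hp, gmulKVg].
Qed.

End EdgeStretch.

Record bijection (A B : Type) := Bijection {
  bij_fun :> A -> B;
  bij_inv : B -> A;
  bij_funK : forall x, bij_inv (bij_fun x) = x;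
  bij_invK : forall y, bij_fun (bij_inv y) = y
}.

Definition bij_sym (A B : Type) (e : bijection A B) : bijection B A :=
  Bijection (bij_inv e) e (bij_invK e) (bij_funK e).

Lemma biLipschitz_of_edge_stretch (A B : group) (SA : list A) (SB : list B)
    (e : bijection A B) (K : nat) :
  (1 <= K)%nat -> edge_stretch_le SA SB e K -> edge_stretch_le SB SA (bij_sym e) K ->
  biLipschitz_equiv (gmul A) (gone A) (ginv A) SA (gmul B) (gone B) (ginv B) SB.
Proof.
  intros HK He He'. exists e. split.
  - split.
    + intros x y E. now rewrite <- (bij_funK e x), <- (bij_funK e y), E.
    + intro y. exists (bij_inv e y). apply bij_invK.
  - assert (HK' : (1 <= INR K)%R) by exact (le_INR 1 K HK).
    exists (INR K). split; [exact HK'|].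
    intros x y n m Hn Hm.
    pose proof (wdist_le_edge_stretch He Hn Hm) as Hup.
    rewrite <- (bij_funK e x), <- (bij_funK e y) in Hn.
    pose proof (wdist_le_edge_stretch He' Hm Hn) as Hlo.
    apply le_INR in Hup, Hlo. rewrite mult_INR in Hup, Hlo.
    split; [|exact Hup].
    apply (Rmult_le_reg_r (INR K)); [lra|].
    unfold Rdiv. rewrite Rmult_assoc, Rinv_l by lra. lra.
Qed.

Lemma group_biLipschitz_edge_stretch (G H : group) (SG : list G) (SH : list H) :
  generates (gmul G) (gone G) (ginv G) SG -> generates (gmul H) (gone H) (ginv H) SH ->
  group_biLipschitz G H SG SH ->
  exists (e : bijection G H) (K : nat), (1 <= K)%nat /\
    edge_stretch_le SG SH e K /\ edge_stretch_le SH SG (bij_sym e) K.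
Proof.
  intros HG HH (f & (Hinj & Hsurj) & C & HC & Hf).
  assert (Hunique : forall y, exists! x, f x = y).
  { intro y. destruct (Hsurj y) as [x Hx]. exists x. split; [exact Hx|].
    intros x' Hx'. apply Hinj. congruence. }
  pose (fi y := proj1_sig (constructive_definite_description _ (Hunique y))).
  assert (fiK : forall y, f (fi y) = y)
    by (intro y; exact (proj2_sig (constructive_definite_description _ (Hunique y)))).
  assert (fK : forall x, fi (f x) = x) by (intro x; apply Hinj, fiK).
  destruct (INR_unbounded C) as [K1 HK1].
  assert (HCK : (C <= INR (Nat.max 1 K1))%R)
    by (pose proof (le_INR K1 _ (Nat.le_max_r 1 K1)); lra).
  exists (Bijection f fi fK fiK), (Nat.max 1 K1). split; [lia|split].
  - eapply edge_stretch_of_lipschitz; [exact HH | exact HCK |].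
    intros x y n m Hn Hm. exact (proj2 (Hf x y n m Hn Hm)).
  - eapply edge_stretch_of_lipschitz; [exact HG | exact HCK |].
    intros x y n m Hn Hm. simpl in Hm. rewrite <- (fiK x), <- (fiK y) in Hn.
    pose proof (proj1 (Hf _ _ _ _ Hm Hn)) as Hmn.
    unfold Rdiv in Hmn. apply (Rmult_le_compat_r C) in Hmn; [|lra].
    rewrite Rmult_assoc, Rinv_l in Hmn by lra. lra.
Qed.

Section WreathGroup.
Variables N G : group.

Lemma lamp_ext (a b : lamp N G) : (forall x, proj1_sig a x = proj1_sig b x) -> a = b.
Proof.
  destruct a as [fa pa], b as [fb pb]; simpl; intro E.
  assert (fa = fb) by (apply functional_extensionality; exact E). subst.
  f_equal. apply proof_irrelevance.
Qed.

Lemma wmulA (x y z : wreath N G) :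
  wmul N G x (wmul N G y z) = wmul N G (wmul N G x y) z.
Proof.
  destruct x as [a g], y as [b h], z as [c k]. unfold wmul; simpl. f_equal.
  - apply lamp_ext; intro x; simpl. now rewrite gmulA, ginvM, (gmulA G (ginv G h)).
  - apply gmulA.
Qed.

Lemma wmul1l (x : wreath N G) : wmul N G (wone N G) x = x.
Proof.
  destruct x as [a g]. unfold wmul; simpl. f_equal.
  - apply lamp_ext; intro x; simpl. now rewrite gmul1l, ginv1, gmul1l.
  - apply gmul1l.
Qed.

Lemma wmul1r (x : wreath N G) : wmul N G x (wone N G) = x.
Proof.
  destruct x as [a g]. unfold wmul; simpl. f_equal.
  - apply lamp_ext; intro x; simpl. apply gmul1r.
  - apply gmul1r.
Qed.

Lemma wmulVl (x : wreath N G) : wmul N G (winv N G x) x = wone N G.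
Proof.
  destruct x as [a g]. unfold wmul, winv, wone; simpl. f_equal.
  - apply lamp_ext; intro x; simpl. rewrite ginvK. apply gmulVl.
  - apply gmulVl.
Qed.

Lemma wmulVr (x : wreath N G) : wmul N G x (winv N G x) = wone N G.
Proof.
  destruct x as [a g]. unfold wmul, winv, wone; simpl. f_equal.
  - apply lamp_ext; intro x; simpl. rewrite ginvK, gmulKVg. apply gmulVr.
  - apply gmulVr.
Qed.

Definition wreath_group : group :=
  @Group (wreath N G) (wmul N G) (wone N G) (winv N G) wmulA wmul1l wmul1r wmulVl wmulVr.

Lemma winv_base (t : G) : winv N G (lone N G, t) = (lone N G, ginv G t).
Proof. unfold winv; simpl. f_equal. apply lamp_ext; intro x; simpl. apply ginv1. Qed.

Lemma word_prod_base (w : list G) :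
  word_prod (wmul N G) (wone N G) (map (fun t => (lone N G, t)) w) = (lone N G, wprod G w).
Proof.
  induction w as [|t w IH]; simpl; [reflexivity|].
  rewrite IH. unfold wmul; simpl. f_equal. apply lamp_ext; intro x; simpl. apply gmul1l.
Qed.

Lemma lshift_ldelta_at (g : G) (s : N) (x : G) :
  proj1_sig (lshift g (ldelta N G s)) x = if excluded_middle_informative (x = g) then s else gone N.
Proof.
  simpl. destruct (excluded_middle_informative (gmul G (ginv G g) x = gone G)) as [E|E];
    destruct (excluded_middle_informative (x = g)) as [->|Hx]; auto.
  - apply gmul_inv_eq1 in E. contradiction.
  - exfalso. apply E, gmulVl.
Qed.

End WreathGroup.

Section Transport.
Context {N G H : group} (e : bijection G H).

Lemma fin_supp_transport (phi : G -> N) :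
  fin_supp N G phi -> fin_supp N H (fun y => phi (bij_inv e y)).
Proof.
  intros [l Hl]. exists (map e l). intros y Hy. apply Hl. intro Hin. apply Hy.
  rewrite <- (bij_invK e y). now apply in_map.
Qed.

Definition lamp_transport (a : lamp N G) : lamp N H :=
  exist _ _ (fin_supp_transport (proj2_sig a)).

Definition wreath_transport (u : wreath N G) : wreath N H :=
  (lamp_transport (fst u), e (snd u)).

Lemma wreath_transport_lamp_step (u : wreath N G) (s : N) :
  wreath_transport (wmul N G u (ldelta N G s, gone G))
  = wmul N H (wreath_transport u) (ldelta N H s, gone H).
Proof.
  destruct u as [a g]. unfold wreath_transport, wmul. simpl fst; simpl snd. f_equal.
  - apply lamp_ext; intro y. cbn [proj1_sig lamp_transport lmul]. f_equal.
    rewrite !lshift_ldelta_at.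
    destruct (excluded_middle_informative (bij_inv e y = g)) as [E|E];
      destruct (excluded_middle_informative (y = e g)) as [E'|E']; auto.
    + destruct E'. now rewrite <- E, bij_invK.
    + destruct E. now rewrite E', bij_funK.
  - now rewrite !gmul1r.
Qed.

Lemma wreath_transport_base_step (u : wreath N G) (t : G) (h : H) :
  gmul H (e (snd u)) h = e (gmul G (snd u) t) ->
  wreath_transport (wmul N G u (lone N G, t)) = wmul N H (wreath_transport u) (lone N H, h).
Proof.
  destruct u as [a g]. simpl. intro E. unfold wreath_transport, wmul; simpl. f_equal.
  - now apply lamp_ext.
  - now rewrite E.
Qed.

Lemma wreath_transport_edge_stretch (SN : list N) (SG : list G) (SH : list H) (K : nat) :
  (1 <= K)%nat -> edge_stretch_le SG SH e K ->
  edge_stretch_le (A := wreath_group N G) (B := wreath_group N H)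
    (wreath_gens N G SN SG) (wreath_gens N H SN SH) wreath_transport K.
Proof.
  intros HK He. apply edge_stretch_le_of_gens. intros u a Ha. unfold wreath_gens in Ha.
  apply in_app_or in Ha as [Ha|Ha]; apply in_map_iff in Ha as [z [<- Hz]].
  - exists [(ldelta N H z, gone H)]. split; [|split].
    + apply Forall_cons; [left | constructor].
      apply in_or_app. left. now apply (in_map (fun s => (ldelta N H s, gone H))).
    + simpl. lia.
    + simpl. now rewrite wmul1r, wreath_transport_lamp_step.
  - destruct (He (snd u) z (or_introl Hz)) as (w & Hw & Hl & Hp).
    exists (map (fun t => (lone N H, t)) w). split; [|split].
    + apply Forall_map. eapply Forall_impl; [|exact Hw].
      intros t Ht. cbn [ginv wreath_group]. unfold wreath_gens. rewrite winv_base, !in_app_iff.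
      destruct Ht as [Ht|Ht]; [left|right]; right; now apply (in_map (fun t => (lone N H, t))).
    + now rewrite length_map.
    + simpl. rewrite word_prod_base. symmetry. now apply wreath_transport_base_step.
Qed.

End Transport.

Lemma wreath_transportK {N G H : group} (e : bijection G H) (u : wreath N G) :
  wreath_transport (bij_sym e) (wreath_transport e u) = u.
Proof.
  destruct u as [a g]. unfold wreath_transport; simpl. f_equal.
  - apply lamp_ext; intro x; simpl. now rewrite bij_funK.
  - apply bij_funK.
Qed.

Lemma wreath_transportKV {N G H : group} (e : bijection G H) (v : wreath N H) :
  wreath_transport e (wreath_transport (bij_sym e) v) = v.
Proof.
  destruct v as [a h]. unfold wreath_transport; simpl. f_equal.
  - apply lamp_ext; intro y; simpl. now rewrite bij_invK.
  - apply bij_invK.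
Qed.

Definition wreath_bijection (N : group) {G H : group} (e : bijection G H) :
  bijection (wreath_group N G) (wreath_group N H) :=
  Bijection (wreath_transport (N := N) e) (wreath_transport (N := N) (bij_sym e))
    (wreath_transportK (N := N) e) (wreath_transportKV (N := N) e).

Theorem lemma5p3 (N G H : group) (SN : list N) (SG : list G) (SH : list H) :
  generates (gmul N) (gone N) (ginv N) SN ->
  generates (gmul G) (gone G) (ginv G) SG ->
  generates (gmul H) (gone H) (ginv H) SH ->
  group_biLipschitz G H SG SH ->
  biLipschitz_equiv (wmul N G) (wone N G) (winv N G) (wreath_gens N G SN SG)
                    (wmul N H) (wone N H) (winv N H) (wreath_gens N H SN SH).
Proof.
  intros _ HG HH Hf.
  destruct (group_biLipschitz_edge_stretch HG HH Hf) as (e & K & HK & He & He').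
  apply (biLipschitz_of_edge_stretch (wreath_bijection N e) HK).
  - exact (wreath_transport_edge_stretch e SN HK He).
  - exact (wreath_transport_edge_stretch (bij_sym e) SN HK He').
Qed.
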